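(* Let $\mathcal H$ be a real Hilbert space. Let $\Psi: \mathcal H \to \mathbb R \cup \{+\infty\}$ be proper, lower-semicontinuous and convex, and let $\Phi: \mathcal H \to \mathbb R$ be convex and continuously differentiable with $L$-Lipschitz continuous gradient; set $\Theta=\Psi+\Phi$ and suppose $\operatorname{argmin}\Theta\neq\emptyset$. Let $\alpha>3$ and $0<s<\frac1L$, and let $(x_k)$ be generated by: given arbitrary $x_0,x_1\in\mathcal H$, for $k\ge1$, $$y_k = x_k + \frac{k-1}{k+\alpha-1}(x_k-x_{k-1}),\qquad x_{k+1} = \operatorname{prox}_{s\Psi}\big(y_k - s\nabla\Phi(y_k)\big).$$ Let $x^*\in\operatorname{argmin}\Theta$. Then the limit $$\lim_{k\to\infty}\Big[k^2\|x_{k+1}-x_k\|^2 + (k+1)^2\big(\Theta(x_{k+1})-\Theta(x^* )\big)\Big]$$ exists.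
   Context: $\operatorname{prox}_{s\Psi}(z) = \operatorname{argmin}_{u\in\mathcal H}\{\Psi(u) + \frac{1}{2s}\|u-z\|^2\}$ denotes the proximal operator. *)

From HB Require Import structures.
From mathcomp Require Import all_boot all_order all_algebra.
From mathcomp Require Import all_classical all_reals all_analysis.
Set Implicit Arguments. Unset Strict Implicit. Unset Printing Implicit Defensive.
Import Order.TTheory GRing.Theory Num.Theory.
Import numFieldNormedType.Exports.
Local Open Scope classical_set_scope.
Local Open Scope ring_scope.

(* A real Hilbert space is modelled as a complete normed space H over a
   realType R whose norm comes from an inner product [ip]. *)
Definition is_inner_product (R : realType) (H : normedModType R)
  (ip : H -> H -> R) : Prop :=
  [/\ forall x y, ip x y = ip y x,
      forall a x y z, ip (a *: x + y) z = a * ip x z + ip y z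
    & forall x, `|x| ^+ 2 = ip x x].

Definition convex_fun (R : realType) (H : normedModType R) (f : H -> R) :=
  forall (x y : H) (t : R), 0 <= t <= 1 ->
    f (t *: x + (1 - t) *: y) <= t * f x + (1 - t) * f y.

Definition convex_efun (R : realType) (H : normedModType R) (f : H -> \bar R) :=
  forall (x y : H) (t : R), 0 < t < 1 ->
    (f (t *: x + (1 - t) *: y)%R <= t%:E * f x + (1 - t)%:E * f y)%E.

Definition proper_efun (R : realType) (H : Type) (f : H -> \bar R) :=
  (forall x, f x != -oo%E) /\ exists x, f x \is a fin_num.

(* p = prox_{s Psi}(z), i.e. p is a minimizer of u |-> Psi u + 1/(2s) |u - z|^2
   (this minimizer is unique, so this characterizes prox_{s Psi}(z)) *)
Definition is_prox (R : realType) (H : normedModType R) (s : R)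
  (Psi : H -> \bar R) (z p : H) :=
  forall u : H, (Psi p + ((2 * s)^-1 * `|p - z| ^+ 2)%R%:E <=
                 Psi u + ((2 * s)^-1 * `|u - z| ^+ 2)%R%:E)%E.

From HB Require Import structures.
From mathcomp Require Import all_boot all_order all_algebra.
From mathcomp Require Import all_classical all_reals all_analysis.
From mathcomp Require Import lra zify ring.
Set Implicit Arguments. Unset Strict Implicit. Unset Printing Implicit Defensive.
Import Order.TTheory GRing.Theory Num.Theory.
Import numFieldNormedType.Exports.
Local Open Scope classical_set_scope.
Local Open Scope ring_scope.

(* This is the Lyapunov argument of Attouch and Peypouquet.  Write
   [theta_k = Theta(x_k) - Theta(x* )], [N_k = |x_k - x_(k-1)|^2],
   [t_k = (k + alpha - 2) / (alpha - 1)] and [beta_k = (k - 1) / (k + alpha - 1)].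
   The basic forward-backward inequality
   [Theta(p) + |y - p|^2 / 2s <= Theta(z) + <y - p, y - z> / s], taken at
   [z = x_k] and at [z = x*], yields
   - that the energy [2s t_k^2 theta_k + |t_k x_k - (t_k - 1) x_(k-1) - x*|^2]
     decreases by at least a multiple of [k theta_k], since [alpha > 3];
   - the descent inequality
     [2s theta_(k+1) + N_(k+1) <= 2s theta_k + beta_k^2 N_k].
   Together they make [sum_k k (2s theta_(k+1) + N_(k+1))] finite.  As the
   summand [2s theta_(k+1) + N_(k+1)] is nonincreasing, it is [o(1/k^2)], so
   the limit exists and is [0]. *)

Lemma sum_le_telescope (R : realDomainType) (u q : nat -> R) (m n : nat) :
  (forall k, (m <= k)%N -> u k <= q k - q k.+1) ->
  (forall k, (m <= k)%N -> 0 <= q k) ->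
  \sum_(m <= k < n) u k <= q m.
Proof.
move=> uq q_ge0; have [nm|mn] := leqP n m; first by rewrite big_geq ?q_ge0.
apply: le_trans (_ : \sum_(m <= k < n) - (q k.+1 - q k) <= _).
  by apply: ler_sum_nat => k /andP[mk _]; rewrite opprB uq.
by rewrite sumrN telescope_sumr ?(ltnW mn) // opprB gerBl q_ge0 // ltnW.
Qed.

Lemma nondecreasing_bounded_tail (R : realType) (u : R ^nat) (B : R) :
  nondecreasing_seq u -> (forall n, u n <= B) ->
  forall e, 0 < e -> exists N, forall m n, (N <= m)%N -> u n - u m <= e.
Proof.
move=> u_nd uB e e0.
have u_sup : has_sup (range u) by split; [exists (u 0%N), 0%N | exists B => _ [n _ <-]].
have [_ [N _ <-] supN] := sup_adherent e0 u_sup.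
exists N => m n Nm; have := u_nd _ _ Nm.
have : u n <= sup (range u) by apply: sup_upper_bound => //; exists n.
lra.
Qed.

Lemma weighted_summable_nonincreasing_cvg0 (R : realType) (w : nat -> R)
    (B : R) (K : nat) :
  (forall k, (K <= k)%N -> 0 <= w k) ->
  (forall k, (K <= k)%N -> w k.+1 <= w k) ->
  (forall n, \sum_(K <= j < n) j%:R * w j <= B) ->
  (fun k => k.+1%:R ^+ 2 * w k) @ \oo --> 0.
Proof.
move=> w_ge0 w_ni S_le.
have w_le i j : (K <= i <= j)%N -> w j <= w i.
  move=> /andP[Ki /subnK <-]; elim: (j - i)%N => [|n IH]; first by rewrite add0n.
  by apply: le_trans IH; rewrite addSn w_ni //; lia.
pose S n := \sum_(K <= j < n) j%:R * w j.
have S_nd : nondecreasing_seq S.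
  by apply: nondecreasing_series => j Kj _; rewrite mulr_ge0 ?w_ge0.
have block m : (K <= m)%N -> m.+1%:R * m%:R * w (2 * m)%N <= S (2 * m).+1 - S m.
  move=> Km; rewrite /S (big_cat_nat (n := m)) //=; last by lia.
  rewrite addrAC subrr add0r.
  apply: le_trans (_ : \sum_(m <= j < (2 * m).+1) m%:R * w (2 * m)%N <= _).
    rewrite sumr_const_nat (_ : ((2 * m).+1 - m)%N = m.+1); last by lia.
    by rewrite -[leRHS]mulr_natl mulrA.
  apply: ler_sum_nat => j /andP[mj j2m].
  by rewrite ler_pM ?ler0n ?w_ge0 ?ler_nat //; [lia | apply: w_le; lia].
apply/cvgrPdist_le => e e0.
have [N tail] := @nondecreasing_bounded_tail _ S B S_nd S_le _ (divr_gt0 e0 (ltr0n R 8)).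
exists (2 * maxn N (maxn K 1))%N => // k /= Nk.
have := odd_double_half k; rewrite -mul2n; move: k./2 => m k_half.
have [Km Nm m1 km] : [/\ (K <= m)%N, (N <= m)%N, (1 <= m)%N & (2 * m <= k <= (2 * m).+1)%N].
  by case: (odd k) k_half => /= k_half; split; lia.
have wk : 0 <= w k <= w (2 * m)%N by rewrite w_ge0 ?w_le; lia.
have k_sqr : k.+1%:R ^+ 2 <= 8 * (m.+1%:R * m%:R) :> R.
  by rewrite -natrX -!natrM ler_nat; nia.
rewrite sub0r normrN ger0_norm ?mulr_ge0 ?exprn_ge0 //; last by case/andP: wk.
apply: le_trans (_ : 8 * (m.+1%:R * m%:R * w (2 * m)%N) <= _).
  by rewrite mulrA ler_pM ?exprn_ge0 //; case/andP: wk.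
have := block m Km; have := tail m (2 * m).+1 Nm; lra.
Qed.

Definition tau {R : fieldType} (alpha : R) (k : nat) : R :=
  (k%:R + alpha - 2) / (alpha - 1).

Definition momentum {R : fieldType} (alpha : R) (k : nat) : R :=
  (k%:R - 1) / (k%:R + alpha - 1).

Lemma tauS (R : fieldType) (alpha : R) k :
  tau alpha k.+1 = tau alpha k + (alpha - 1)^-1.
Proof. by rewrite /tau -addn1 natrD; ring. Qed.

Lemma tau_gt0 (R : realFieldType) (alpha : R) k : 2 < alpha -> 0 < tau alpha k.
Proof. by move=> alpha2; rewrite divr_gt0 //; have := ler0n R k; lra. Qed.

Lemma momentum_ge0 (R : realFieldType) (alpha : R) k :
  0 < alpha -> (1 <= k)%N -> 0 <= momentum alpha k.
Proof. by rewrite -(ler_nat R) => alpha0 k1; rewrite divr_ge0 //; lra. Qed.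

Lemma momentum_le1 (R : realFieldType) (alpha : R) k :
  0 < alpha -> (1 <= k)%N -> momentum alpha k <= 1.
Proof. by rewrite -(ler_nat R) => alpha0 k1; rewrite ler_pdivrMr ?mul1r; lra. Qed.

Lemma sqr_momentum_le (R : realFieldType) (alpha : R) k : 3 <= alpha -> (2 <= k)%N ->
  k%:R ^+ 2 * momentum alpha k ^+ 2 <= (k%:R - 1) ^+ 2 - k%:R / 4.
Proof.
rewrite -(ler_nat R) /momentum => alpha3; set K := k%:R => K2.
rewrite expr_div_n mulrA ler_pdivrMr ?exprn_gt0 //; last by lra.
have rhs_ge0 : 0 <= (K - 1) ^+ 2 - K / 4 by nra.
apply: le_trans (_ : ((K - 1) ^+ 2 - K / 4) * (K + 2) ^+ 2 <= _); first by nra.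
by rewrite ler_wpM2l // lerXn2r ?nnegrE; lra.
Qed.

Lemma tau_ge1 (R : realFieldType) (alpha : R) k : 1 < alpha -> (1 <= k)%N ->
  1 <= tau alpha k.
Proof. by rewrite -(ler_nat R) => alpha1 k1; rewrite ler_pdivlMr ?mul1r; lra. Qed.

Lemma momentum_mul_tauS (R : realFieldType) (alpha : R) k : 1 < alpha ->
  momentum alpha k * tau alpha k.+1 = tau alpha k - 1.
Proof.
move=> alpha1; rewrite /momentum /tau -[k.+1]addn1 natrD; field.
by rewrite !lt0r_neq0 //; have := ler0n R k; lra.
Qed.

Section Lyapunov.
Variables (R : realType) (s alpha : R) (theta N V : nat -> R).
Hypotheses (s_gt0 : 0 < s) (alpha_gt3 : 3 < alpha).
Hypotheses (theta_ge0 : forall {k}, (2 <= k)%N -> 0 <= theta k)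
  (N_ge0 : forall {k}, (2 <= k)%N -> 0 <= N k)
  (V_ge0 : forall {k}, (2 <= k)%N -> 0 <= V k).
Hypothesis energy_step : forall {k}, (2 <= k)%N ->
  2 * s * (tau alpha k.+1 ^+ 2 * theta k.+1) + V k.+1 <=
  2 * s * ((tau alpha k.+1 ^+ 2 - tau alpha k.+1) * theta k) + V k.
Hypothesis descent_step : forall {k}, (2 <= k)%N ->
  2 * s * theta k.+1 + N k.+1 <= 2 * s * theta k + momentum alpha k ^+ 2 * N k.

Let c := (alpha - 1)^-1.

Let c_gt0 : 0 < c.
Proof. by rewrite invr_gt0; have := alpha_gt3; lra. Qed.

Let alpha3_c : (alpha - 3) * c = 1 - 2 * c.
Proof. by rewrite /c; field; apply: lt0r_neq0; have := alpha_gt3; lra. Qed.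

Let c_lt_half : c < 1 / 2.
Proof.
have : 0 < (alpha - 3) * c by rewrite mulr_gt0 ?c_gt0 //; have := alpha_gt3; lra.
by rewrite alpha3_c; lra.
Qed.

Let energy k := 2 * s * (tau alpha k ^+ 2 * theta k) + V k.

Let energy_decrease k : (2 <= k)%N ->
  energy k.+1 + 2 * s * ((alpha - 3) * c * tau alpha k * theta k) <= energy k.
Proof.
move=> k2; have := energy_step k2; rewrite /energy tauS -/c.
have tau_sqr : (tau alpha k + c) ^+ 2 - (tau alpha k + c) <=
               tau alpha k ^+ 2 - (alpha - 3) * c * tau alpha k.
  have := tau_gt0 k (lt_trans (ltr_nat R 2 3) alpha_gt3).
  by rewrite alpha3_c; have := c_lt_half; have := c_gt0; nra.
have s2_ge0 : 0 <= 2 * s by rewrite mulr_ge0 // ltW.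
have := ler_wpM2l s2_ge0 (ler_wpM2r (theta_ge0 k2) tau_sqr); lra.
Qed.

Let gap_potential k := (k%:R - 1) ^+ 2 * N k + 2 * s * (k%:R ^+ 2 * theta k).

Let gap_potential_step k : (2 <= k)%N ->
  gap_potential k.+1 + k%:R / 4 * N k <=
  gap_potential k + 2 * s * ((2 * k%:R + 1) * theta k.+1).
Proof.
move=> k2; have := descent_step k2; have := sqr_momentum_le (ltW alpha_gt3) k2.
rewrite /gap_potential -[k.+1]addn1 natrD addrK.
set K := k%:R; set b := momentum alpha k => b_le desc.
have := ler_wpM2r (N_ge0 k2) b_le; have := ler_wpM2l (exprn_ge0 2 (ler0n R k)) desc.
rewrite -/K; nra.
Qed.

Let M := (4 * s + 1) / (2 * s * ((alpha - 3) * c ^+ 2)).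

Let M_ge0 : 0 <= M.
Proof.
by rewrite divr_ge0 ?mulr_ge0 ?exprn_ge0 ?ltW ?c_gt0 //;
  have := alpha_gt3; have := s_gt0; lra.
Qed.

(* Adding [M] times the energy absorbs the [theta] term of [gap_potential_step]. *)
Let potential k := gap_potential k + M * energy k.+1.

Let potential_step k : (2 <= k)%N ->
  potential k.+1 + k%:R / 4 * N k + (k%:R + 1) * theta k.+1 <= potential k.
Proof.
move=> k2; have k3 : (2 <= k.+1)%N by lia.
have M_tau : M * (2 * s * ((alpha - 3) * c * tau alpha k.+1)) =
             (4 * s + 1) * (k%:R + alpha - 1).
  rewrite /M /tau -/c -addn1 natrD; field.
  by rewrite (lt0r_neq0 c_gt0) (lt0r_neq0 s_gt0) lt0r_neq0 //; have := alpha_gt3; lra.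
have weight : 2 * s * (2 * k%:R + 1) + (k%:R + 1) <=
              M * (2 * s * ((alpha - 3) * c * tau alpha k.+1)).
  by rewrite M_tau; have := ler0n R k; have := alpha_gt3; have := s_gt0; nra.
have := ler_wpM2r (theta_ge0 k3) weight.
have := ler_wpM2l M_ge0 (energy_decrease k3); have := gap_potential_step k2.
rewrite /potential; lra.
Qed.

Let potential_ge0 k : (2 <= k)%N -> 0 <= potential k.
Proof.
move=> k2; have k3 : (2 <= k.+1)%N by lia.
have s2_ge0 : 0 <= 2 * s by rewrite mulr_ge0 // ltW.
rewrite /potential /gap_potential /energy !addr_ge0 //.
- by rewrite mulr_ge0 ?sqr_ge0 ?N_ge0.
- by rewrite mulr_ge0 // mulr_ge0 ?sqr_ge0 ?theta_ge0.
by rewrite mulr_ge0 ?M_ge0 // addr_ge0 ?V_ge0 // mulr_ge0 // mulr_ge0 ?sqr_ge0 ?theta_ge0.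
Qed.

Let residual k := 2 * s * theta k.+1 + N k.+1.

Let residual_ge0 k : (1 <= k)%N -> 0 <= residual k.
Proof.
move=> k1; have k2 : (2 <= k.+1)%N by lia.
by rewrite addr_ge0 ?N_ge0 // !mulr_ge0 ?theta_ge0 // ltW.
Qed.

Let residual_nonincreasing k : (1 <= k)%N -> residual k.+1 <= residual k.
Proof.
move=> k1; have k2 : (2 <= k.+1)%N by lia.
apply: le_trans (descent_step k2) _; rewrite lerD2l.
have alpha_gt0 : 0 < alpha by have := alpha_gt3; lra.
rewrite -[leRHS]mul1r ler_wpM2r ?N_ge0 // expr_le1 //.
  exact: momentum_le1.
exact: momentum_ge0.
Qed.

Let weighted_residual_step k : (2 <= k)%N ->
  k%:R * residual k <= (2 * s * potential k + 4 * potential k.+1)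
                - (2 * s * potential k.+1 + 4 * potential k.+2).
Proof.
move=> k2; have k3 : (2 <= k.+1)%N by lia.
have theta_step : (k%:R + 1) * theta k.+1 <= potential k - potential k.+1.
  have : 0 <= k%:R / 4 * N k by rewrite mulr_ge0 ?N_ge0 ?divr_ge0.
  have := potential_step k2; lra.
have N_step : (k%:R + 1) / 4 * N k.+1 <= potential k.+1 - potential k.+2.
  rewrite natr1.
  have : 0 <= (k.+1%:R + 1) * theta k.+2 by rewrite mulr_ge0 ?theta_ge0 //; lra.
  have := potential_step k3; lra.
have := ler_wpM2l (mulr_ge0 (ler0n R 2) (ltW s_gt0)) theta_step.
have : k%:R * theta k.+1 <= (k%:R + 1) * theta k.+1.
  by rewrite ler_wpM2r ?theta_ge0 // lerDl.
have : k%:R * N k.+1 <= (k%:R + 1) * N k.+1 by rewrite ler_wpM2r ?N_ge0 // lerDl.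
rewrite /residual; move: N_step; have := s_gt0; nra.
Qed.

Lemma lyapunov_cvg0 :
  (fun k => k%:R ^+ 2 * N k.+1 + k.+1%:R ^+ 2 * theta k.+1) @ \oo --> 0.
Proof.
have residual_cvg : (fun k => k.+1%:R ^+ 2 * residual k) @ \oo --> 0.
  apply: (@weighted_summable_nonincreasing_cvg0 _ residual _ 2).
  - by move=> k k2; apply: residual_ge0; lia.
  - by move=> k k2; apply: residual_nonincreasing; lia.
  move=> n; apply: sum_le_telescope => k k2; first exact: weighted_residual_step.
  have k3 : (2 <= k.+1)%N by lia.
  by rewrite /= addr_ge0 ?mulr_ge0 ?potential_ge0 // ltW.
apply: (squeeze_cvgr _ (cvg_cst 0)); last first.
  by rewrite -(mulr0 (1 + (2 * s)^-1)); apply: cvgMl_tmp residual_cvg.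
near=> k.
have k2 : (2 <= k.+1)%N by near: k; exists 1%N.
apply/andP; split; first by rewrite addr_ge0 ?mulr_ge0 ?sqr_ge0 ?theta_ge0 ?N_ge0.
apply: le_trans (_ : k.+1%:R ^+ 2 * (N k.+1 + theta k.+1) <= _).
  by rewrite mulrDr lerD2r ler_wpM2r ?N_ge0 // lerXn2r ?nnegrE ?ler_nat.
rewrite mulrCA ler_wpM2l ?exprn_ge0 // /residual.
have s2_gt0 : 0 < 2 * s by rewrite mulr_gt0.
have sK : (2 * s)^-1 * (2 * s * theta k.+1) = theta k.+1.
  by rewrite mulrA mulVf ?mul1r // lt0r_neq0.
have : 0 <= (2 * s)^-1 * N k.+1 by rewrite mulr_ge0 ?N_ge0 // invr_ge0 ltW.
have := mulr_ge0 (ltW s2_gt0) (theta_ge0 k2).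
lra.
Unshelve. all: end_near. Qed.

End Lyapunov.

Lemma linear_coef_ge0 (R : realFieldType) (a b : R) :
  (forall t, 0 < t < 1 -> 0 <= t * a + t ^+ 2 * b) -> 0 <= a.
Proof.
move=> small; rewrite leNgt; apply/negP => a_lt0.
pose B := `|b| + 1; have B_gt0 : 0 < B by rewrite ltr_pwDr.
have bB : b <= B by rewrite (le_trans (ler_norm b)) // lerDl.
(* [t * B = t * a - a / 2], hence [a + t * b <= a / 2 + t * a < 0]. *)
pose t := - a / (2 * (B - a)).
have den_gt0 : 0 < 2 * (B - a) by rewrite mulr_gt0 // subr_gt0 (lt_trans a_lt0).
have t_gt0 : 0 < t by rewrite divr_gt0 // oppr_gt0.
have tE : t * (2 * (B - a)) = - a by rewrite /t mulfVK // gt_eqF.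
have t_lt1 : t < 1 by nra.
have := small t; rewrite t_gt0 t_lt1 => /(_ isT); nra.
Qed.

Section InnerProduct.
Variables (R : realType) (H : normedModType R) (ip : H -> H -> R).
Hypothesis ipP : is_inner_product ip.

Lemma ipC x y : ip x y = ip y x.
Proof. by case: ipP. Qed.

Lemma ip_normE x : ip x x = `|x| ^+ 2.
Proof. by case: ipP. Qed.

Lemma ip_ge0 x : 0 <= ip x x.
Proof. by rewrite ip_normE exprn_ge0. Qed.

Lemma ipDl x y z : ip (x + y) z = ip x z + ip y z.
Proof. by case: ipP => _ lin _; rewrite -[x]scale1r lin mul1r scale1r. Qed.

Lemma ipZl a x z : ip (a *: x) z = a * ip x z.
Proof.
case: ipP => _ lin _.
have ip0 : ip 0 z = 0 by have := lin 1 0 0 z; rewrite scaler0 addr0 mul1r; lra.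
by rewrite -[a *: x]addr0 lin ip0 addr0.
Qed.

Lemma ipNl x z : ip (- x) z = - ip x z.
Proof. by rewrite -scaleN1r ipZl mulN1r. Qed.

Lemma ipDr x y z : ip z (x + y) = ip z x + ip z y.
Proof. by rewrite ipC ipDl !(ipC z). Qed.

Lemma ipZr a x z : ip z (a *: x) = a * ip z x.
Proof. by rewrite ipC ipZl ipC. Qed.

Lemma ipNr x z : ip z (- x) = - ip z x.
Proof. by rewrite ipC ipNl ipC. Qed.

Definition ipE := (ipDl, ipDr, ipZl, ipZr, ipNl, ipNr).

Lemma ip_polarization u v : 2 * ip u v - ip u u = ip v v - ip (v - u) (v - u).
Proof. by rewrite !ipE (ipC v u); ring. Qed.

Lemma ip_le_of_norm_le u d (m : R) : 0 < m -> `|u| <= m * `|d| ->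
  `|ip u d| <= m * ip d d.
Proof.
move=> m_gt0 ud.
have uu : ip u u <= m ^+ 2 * ip d d.
  by rewrite !ip_normE -exprMn; apply: lerXn2r; rewrite ?nnegrE ?mulr_ge0 ?(ltW m_gt0).
have := ip_ge0 (u - m *: d); have := ip_ge0 (u + m *: d).
rewrite !ipE (ipC d u) ler_norml => h1 h2.
by apply/andP; split; rewrite -(ler_pM2l m_gt0); nra.
Qed.

(* Polarization with [u = T (y - a2)] and [v = (T - 1) (y - a1) + (y - z)]. *)
Lemma ip_anchor_identity (a0 a1 a2 z : H) (b T r : R) : b * T = r - 1 ->
  let y := a1 + b *: (a1 - a0) in
  2 * ((T ^+ 2 - T) * ip (y - a2) (y - a1) + T * ip (y - a2) (y - z))
    - T ^+ 2 * ip (y - a2) (y - a2) =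
  ip (r *: a1 - (r - 1) *: a0 - z) (r *: a1 - (r - 1) *: a0 - z)
    - ip (T *: a2 - (T - 1) *: a1 - z) (T *: a2 - (T - 1) *: a1 - z).
Proof.
move=> bT /=; have -> : r = b * T + 1 by lra.
rewrite !ipE (ipC a1 a0) (ipC a2 a0) (ipC a2 a1) (ipC z a0) (ipC z a1) (ipC z a2).
ring.
Qed.

End InnerProduct.

Lemma convex_comb_line (R : pzRingType) (V : lmodType R) (t : R) (y z : V) :
  t *: z + (1 - t) *: y = y + t *: (z - y).
Proof. by rewrite scalerBl scale1r scalerBr addrCA addrC -addrA [- _ + _]addrC. Qed.

Section SmoothFunction.
Variables (R : realType) (H : normedModType R) (ip : H -> H -> R).
Variables (Phi : H -> R) (g : H -> H) (L : R).
Hypotheses (ipP : is_inner_product ip)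
  (Phi_grad : forall z, differentiable Phi z /\ forall h, 'd Phi z h = ip (g z) h)
  (L_gt0 : 0 < L) (g_lipschitz : forall u v, `|g u - g v| <= L * `|u - v|).
Implicit Types (y d p z : H) (t K : R).

Lemma is_derive_along y d t :
  is_derive t 1 (fun u : R => Phi (y + u *: d)) (ip (g (y + t *: d)) d).
Proof.
pose h := (cst y + ( *:%R ^~ d)) : R -> H.
have dh : 'd h t 1 = d by rewrite diff_val /= add0r scale1r.
have [dPhi dPhiE] := Phi_grad (h t).
have dPhi_h : differentiable (Phi \o h) t by exact: differentiable_comp.
rewrite (_ : (fun u => _) = Phi \o h) //; apply: DeriveDef; first exact: diff_derivable.
by rewrite deriveE // diff_comp //= dh dPhiE.
Qed.

Lemma line_quad_mvt y d K t : 0 < t -> exists2 xi, 0 < xi < t &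
  Phi (y + t *: d) - Phi y - t * ip (g y) d + K * t ^+ 2 =
  (ip (g (y + xi *: d)) d - ip (g y) d + 2 * K * xi) * t.
Proof.
move=> t_gt0.
pose f (u : R) := Phi (y + u *: d) - u * ip (g y) d + K * (u * u).
have f_derive (u : R) : is_derive u 1 f (ip (g (y + u *: d)) d - ip (g y) d + 2 * K * u).
  have id' := is_derive_id u (1 : R).
  have D := is_deriveD
    (is_deriveB (is_derive_along y d u) (is_deriveM id' (is_derive_cst (ip (g y) d) u 1)))
    (is_deriveM (is_derive_cst K u 1) (is_deriveM id' id')).
  apply: (is_derive_eq D); rewrite /= !scaler0 !add0r !addr0 /GRing.scale /= !mulr1; ring.
have f_cont : {within `[0, t], continuous f}.
  by apply: derivable_within_continuous => u _; case: (f_derive u).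
have [xi xi_in fE] := MVT t_gt0 (fun u _ => f_derive u) f_cont.
exists xi; first by move: xi_in; rewrite in_itv.
by move: fE; rewrite /f scale0r addr0 !mul0r mulr0 !subr0 addr0 expr2 => <-; ring.
Qed.

Lemma line_taylor_le y d t : 0 < t ->
  `|Phi (y + t *: d) - Phi y - t * ip (g y) d| <= L / 2 * t ^+ 2 * ip d d.
Proof.
move=> t_gt0.
have grad_bound xi : 0 < xi -> `|ip (g (y + xi *: d) - g y) d| <= L * xi * ip d d.
  move=> xi_gt0; apply: ip_le_of_norm_le; rewrite ?mulr_gt0 //.
  by apply: le_trans (g_lipschitz _ _) _; rewrite addrC addKr normrZ gtr0_norm // mulrA.
rewrite ler_norml; apply/andP; split.
- have [xi /andP[xi_gt0 xi_lt] E] := line_quad_mvt y d (L / 2 * ip d d) t_gt0.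
  have := grad_bound xi xi_gt0; rewrite (ipDl ipP) (ipNl ipP) ler_norml => /andP[lo _].
  have : 0 <= (ip (g (y + xi *: d)) d - ip (g y) d + 2 * (L / 2 * ip d d) * xi) * t.
    by rewrite mulr_ge0 ?(ltW t_gt0) //; lra.
  by rewrite -E; lra.
- have [xi /andP[xi_gt0 xi_lt] E] := line_quad_mvt y d (- (L / 2 * ip d d)) t_gt0.
  have := grad_bound xi xi_gt0; rewrite (ipDl ipP) (ipNl ipP) ler_norml => /andP[_ hi].
  have : (ip (g (y + xi *: d)) d - ip (g y) d + 2 * - (L / 2 * ip d d) * xi) * t <= 0.
    by rewrite mulr_le0_ge0 ?(ltW t_gt0) //; lra.
  by rewrite -E; lra.
Qed.

Lemma descent_lemma y p : Phi p <= Phi y + ip (g y) (p - y) + L / 2 * ip (p - y) (p - y).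
Proof.
have := line_taylor_le y (p - y) ltr01.
rewrite ler_norml scale1r expr1n mulr1 !mul1r (addrC y) subrK => /andP[_]; lra.
Qed.

Hypothesis Phi_convex : convex_fun Phi.

Lemma convex_grad_le y z : Phi y + ip (g y) (z - y) <= Phi z.
Proof.
rewrite -subr_ge0; apply: (@linear_coef_ge0 _ _ (L / 2 * ip (z - y) (z - y))).
move=> t /andP[t_gt0 t_lt1].
have t01 : 0 <= t <= 1 by rewrite !ltW.
have := Phi_convex z y t01; rewrite convex_comb_line.
have := line_taylor_le y (z - y) t_gt0; rewrite ler_norml => /andP[taylor _].
lra.
Qed.

End SmoothFunction.

Lemma fin_num_of_le (R : realDomainType) (x y : \bar R) (a b : R) :
  x != -oo%E -> y \is a fin_num -> (x + a%:E <= y + b%:E)%E -> x \is a fin_num.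
Proof. by case: x => [r | | ] //; case: y. Qed.

Section Prox.
Variables (R : realType) (H : normedModType R) (ip : H -> H -> R).
Variables (Psi : H -> \bar R) (s : R).
Hypotheses (ipP : is_inner_product ip) (Psi_convex : convex_efun Psi) (s_gt0 : 0 < s).

Lemma prox_variational_ineq w p z : is_prox s Psi w p ->
  Psi p \is a fin_num -> Psi z \is a fin_num ->
  s * fine (Psi p) + ip (w - p) (z - p) <= s * fine (Psi z).
Proof.
move=> prox /fineK pE /fineK zE.
rewrite -subr_ge0; apply: (@linear_coef_ge0 _ _ (ip (z - p) (z - p) / 2)).
move=> t /andP[t_gt0 t_lt1].
have t01 : 0 < t < 1 by rewrite t_gt0.
have := le_trans (prox (t *: z + (1 - t) *: p)) (leeD2r _ (Psi_convex z p t01)).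
rewrite -[in X in X -> _]pE -[in X in X -> _]zE -!EFinM -!EFinD lee_fin.
rewrite (convex_comb_line t p z) -!(ip_normE ipP).
rewrite (_ : p + t *: (z - p) - w = (p - w) + t *: (z - p)); last by rewrite addrAC.
rewrite (_ : w - p = - (p - w)); last by rewrite opprB.
move: (p - w) (z - p) (fine (Psi p)) (fine (Psi z)) => A B a b.
rewrite !(ipE ipP) (ipC ipP B A).
have s2_gt0 : 0 < 2 * s by rewrite mulr_gt0.
have s2K X : 2 * s * ((2 * s)^-1 * X) = X by rewrite mulrA mulfV ?mul1r // lt0r_neq0.
move=> /(ler_wpM2l (ltW s2_gt0)); rewrite !mulrDr !s2K; lra.
Qed.

End Prox.

Section ForwardBackward.
Variables (R : realType) (H : normedModType R) (ip : H -> H -> R).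
Variables (Psi : H -> \bar R) (Phi : H -> R) (g : H -> H) (L s : R).
Hypotheses (ipP : is_inner_product ip)
  (Psi_convex : convex_efun Psi) (Phi_convex : convex_fun Phi)
  (Phi_grad : forall z, differentiable Phi z /\ forall h, 'd Phi z h = ip (g z) h)
  (L_gt0 : 0 < L) (g_lipschitz : forall u v, `|g u - g v| <= L * `|u - v|)
  (s_gt0 : 0 < s) (sL_le1 : s * L <= 1).

Lemma forward_backward_ineq y p z : is_prox s Psi (y - s *: g y) p ->
  Psi p \is a fin_num -> Psi z \is a fin_num ->
  2 * s * (fine (Psi p) + Phi p) + ip (y - p) (y - p) <=
  2 * s * (fine (Psi z) + Phi z) + 2 * ip (y - p) (y - z).
Proof.
move=> prox p_fin z_fin.
have := prox_variational_ineq ipP Psi_convex s_gt0 prox p_fin z_fin.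
have := ler_wpM2l (ltW s_gt0) (convex_grad_le ipP Phi_grad L_gt0 g_lipschitz Phi_convex y z).
have := ler_wpM2l (ltW s_gt0) (descent_lemma ipP Phi_grad L_gt0 g_lipschitz y p).
have sL : 0 <= 1 - s * L by rewrite subr_ge0.
have := mulr_ge0 sL (ip_ge0 ipP (y - p)).
rewrite !(ipE ipP) (ipC ipP p y).
lra.
Qed.

Section Iteration.
Variables (alpha : R) (x : nat -> H) (xs : H).
Hypotheses (Psi_proper : proper_efun Psi) (alpha_gt3 : 3 < alpha).
Hypothesis step : forall k, (1 <= k)%N ->
  let y := x k + momentum alpha k *: (x k - x k.-1) in
  is_prox s Psi (y - s *: g y) (x k.+1).
Hypothesis xs_min : forall u, (Psi xs + (Phi xs)%:E <= Psi u + (Phi u)%:E)%E.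

(* [fine] makes sense of [Psi] only where it is finite: at [xs] and at the
   iterates [x k], [k >= 2]. *)
Let objective u := fine (Psi u) + Phi u.
Let gap k := objective (x k) - objective xs.
Let N k := `|x k - x k.-1| ^+ 2.
Let V k := `|tau alpha k *: x k - (tau alpha k - 1) *: x k.-1 - xs| ^+ 2.

Let iterate_fin_num k : (2 <= k)%N -> Psi (x k) \is a fin_num.
Proof.
case: k => // k k1; have [Psi_ninfty [z z_fin]] := Psi_proper.
exact: fin_num_of_le (Psi_ninfty _) z_fin (step k1 z).
Qed.

Let minimizer_fin_num : Psi xs \is a fin_num.
Proof.
have [Psi_ninfty [z z_fin]] := Psi_proper.
exact: fin_num_of_le (Psi_ninfty _) z_fin (xs_min z).
Qed.

Let gap_ge0 k : (2 <= k)%N -> 0 <= gap k.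
Proof.
move=> k2; have := xs_min (x k).
by rewrite -(fineK (iterate_fin_num k2)) -(fineK minimizer_fin_num) -!EFinD lee_fin subr_ge0.
Qed.

Let iterate_descent k : (2 <= k)%N ->
  2 * s * gap k.+1 + N k.+1 <= 2 * s * gap k + momentum alpha k ^+ 2 * N k.
Proof.
move=> k2; have k1 : (1 <= k)%N by lia.
have := forward_backward_ineq (step k1) (iterate_fin_num (leqW k2)) (iterate_fin_num k2).
set y := x k + _ *: _.
have := ip_polarization ipP (y - x k.+1) (y - x k).
have -> : y - x k - (y - x k.+1) = x k.+1 - x k by rewrite opprB addrC addrA subrK.
have -> : y - x k = momentum alpha k *: (x k - x k.-1) by rewrite addrC addKr.
rewrite !(ipZl ipP) !(ipZr ipP) /gap /N /objective /= -!(ip_normE ipP).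
lra.
Qed.

Let iterate_energy k : (2 <= k)%N ->
  2 * s * (tau alpha k.+1 ^+ 2 * gap k.+1) + V k.+1 <=
  2 * s * ((tau alpha k.+1 ^+ 2 - tau alpha k.+1) * gap k) + V k.
Proof.
move=> k2; have k1 : (1 <= k)%N by lia.
have alpha1 : 1 < alpha by have := alpha_gt3; lra.
set T := tau alpha k.+1; have T1 : 1 <= T by apply: tau_ge1.
have T_ge0 : 0 <= T by lra.
have TT_ge0 : 0 <= T ^+ 2 - T by rewrite subr_ge0 expr2 ler_peMl.
have := forward_backward_ineq (step k1) (iterate_fin_num (leqW k2)) (iterate_fin_num k2).
move/(ler_wpM2l TT_ge0).
have := forward_backward_ineq (step k1) (iterate_fin_num (leqW k2)) minimizer_fin_num.
move/(ler_wpM2l T_ge0).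
have := ip_anchor_identity ipP (x k.-1) (x k) (x k.+1) xs (momentum_mul_tauS k alpha1).
rewrite /= -/T /gap /V /objective -!(ip_normE ipP).
set y := x k + _ *: _.
lra.
Qed.

Lemma inertial_forward_backward_cvg0 :
  (fun k : nat =>
     ((k%:R ^+ 2 * `|x k.+1 - x k| ^+ 2)%:E
      + (k.+1%:R ^+ 2)%:E * ((Psi (x k.+1) + (Phi (x k.+1))%:E)
                            - (Psi xs + (Phi xs)%:E)))%E) @ \oo --> 0%:E.
Proof.
have N_ge0 k : (2 <= k)%N -> 0 <= N k by rewrite exprn_ge0.
have V_ge0 k : (2 <= k)%N -> 0 <= V k by rewrite exprn_ge0.
have := lyapunov_cvg0 s_gt0 alpha_gt3 gap_ge0 N_ge0 V_ge0 iterate_energy iterate_descent.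
have termE : \forall k \near \oo,
    ((k%:R ^+ 2 * `|x k.+1 - x k| ^+ 2)%:E
     + (k.+1%:R ^+ 2)%:E * ((Psi (x k.+1) + (Phi (x k.+1))%:E)
                           - (Psi xs + (Phi xs)%:E)))%E =
    (k%:R ^+ 2 * N k.+1 + k.+1%:R ^+ 2 * gap k.+1)%:E.
  near=> k; have k2 : (2 <= k.+1)%N by near: k; exists 1%N.
  by rewrite -(fineK (iterate_fin_num k2)) -(fineK minimizer_fin_num) -!EFinD.
move=> cvg0; apply/fine_cvgP; split; first by apply: filterS termE => k ->.
by apply: cvg_trans cvg0; apply: near_eq_cvg; apply: filterS termE => k /= ->.
Unshelve. all: end_near. Qed.

End Iteration.
End ForwardBackward.

Theorem lemma1 (R : realType) (H : completeNormedModType R)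
  (ip : H -> H -> R) (Psi : H -> \bar R) (Phi : H -> R) (gradPhi : H -> H)
  (L alpha s : R) (x : nat -> H) (xstar : H) :
  is_inner_product ip ->
  proper_efun Psi -> lower_semicontinuous Psi -> convex_efun Psi ->
  convex_fun Phi ->
  (forall z : H, differentiable Phi z /\
     forall h : H, 'd Phi z h = ip (gradPhi z) h) ->
  continuous gradPhi ->
  0 < L ->
  (forall u v : H, `|gradPhi u - gradPhi v| <= L * `|u - v|) ->
  (exists z : H, forall u : H, (Psi z + (Phi z)%:E <= Psi u + (Phi u)%:E)%E) ->
  3 < alpha -> 0 < s -> s < L^-1 ->
  (forall k : nat, (1 <= k)%N ->
     let y := x k + ((k%:R - 1) / (k%:R + alpha - 1)) *: (x k - x k.-1) in
     is_prox s Psi (y - s *: gradPhi y) (x k.+1)) ->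
  (forall u : H, (Psi xstar + (Phi xstar)%:E <= Psi u + (Phi u)%:E)%E) ->
  exists l : R,
    (fun k : nat =>
       ((k%:R ^+ 2 * `|x k.+1 - x k| ^+ 2)%R%:E
        + (k.+1%:R ^+ 2)%R%:E * ((Psi (x k.+1) + (Phi (x k.+1))%:E)
                              - (Psi xstar + (Phi xstar)%:E)))%E)
    @ \oo --> l%:E.
Proof.
move=> ipP Psi_proper _ Psi_convex Phi_convex Phi_grad _ L_gt0 g_lipschitz _
  alpha_gt3 s_gt0 s_lt step xs_min.
have sL_le1 : s * L <= 1.
  by apply: ltW; rewrite -(ltr_pM2r L_gt0) mulVf ?lt0r_neq0 in s_lt.
exists 0; exact: (inertial_forward_backward_cvg0 ipP Psi_convex Phi_convex Phi_grad
  L_gt0 g_lipschitz s_gt0 sL_le1 Psi_proper alpha_gt3 step xs_min).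
Qed.
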